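(* Let $R>0$. For a Ptolemy interval $([0,1],d)$ with $d(0,1)=R$ consider the curve $t\mapsto p_t=(d(t,1),d(t,0))\in Q$, $t\in[0,1]$. This assignment induces a one-to-one correspondence between isometry classes of Ptolemy intervals $([0,1],d)$ with $d(0,1)=R$ and convex curves in $T(e_R^1,e_R^2)$ from $e_R^1$ to $e_R^2$ (considered as subsets of $Q$), modulo reflection at the bisecting line $\{(a,a):a\ge0\}$ of $Q$.
   Context: A Ptolemy interval (Ptolemy segment) is a compact interval with a metric $d$ inducing its standard topology such that $d(x_1,x_3)d(x_2,x_4)=d(x_1,x_2)d(x_3,x_4)+d(x_1,x_4)d(x_3,x_2)$ whenever $x_1,x_2,x_3,x_4$ lie in this order on the interval. Let $Q=[0,\infty)\times[0,\infty)\subset\mathbb{R}^2$, $e_R^1=(R,0)$, $e_R^2=(0,R)$, and let $\arg(p)$ denote the polar angle of $p\in Q\setminus\{0\}$. For $u,w\in Q$ with $\arg(u)<\arg(w)$, $T(u,w)=\{\lambda u+\mu w\in Q:\ \lambda,\mu\ge0,\ \lambda+\mu\ge1,\ \lambda+1\ge\mu,\ \mu+1\ge\lambda\}$. A curve $t\mapsto p_t$ in $Q$, $t\in[0,1]$, from $e_R^1$ to $e_R^2$ is convex if it is continuous, $\arg(p_t)$ is strictly increasing in $t$, and the bounded component of $Q\setminus\{p_t:t\in[0,1]\}$ is convex. *)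

From HB Require Import structures.
From mathcomp Require Import all_boot all_order all_algebra.
From mathcomp Require Import all_classical all_reals all_analysis.
Set Implicit Arguments. Unset Strict Implicit. Unset Printing Implicit Defensive.
Import Order.TTheory GRing.Theory Num.Theory.
Import numFieldNormedType.Exports.
Local Open Scope classical_set_scope.
Local Open Scope ring_scope.

Section Defs.
Variable R : realType.

Definition I01 : set R := `[0, 1]%classic.

(** [d] is a metric on [0,1] (only its values on [0,1]x[0,1] matter). *)
Definition metric_on01 (d : R -> R -> R) : Prop :=
  [/\ (forall x, I01 x -> d x x = 0),
      (forall x y, I01 x -> I01 y -> d x y = 0 -> x = y),
      (forall x y, I01 x -> I01 y -> d x y = d y x) &
      (forall x y z, I01 x -> I01 y -> I01 z -> d x z <= d x y + d y z)].

Definition d_open (d : R -> R -> R) (U : set R) : Prop :=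
  forall x, U x -> exists2 e : R, 0 < e &
    forall y, I01 y -> d x y < e -> U y.

Definition std_open (U : set R) : Prop :=
  forall x, U x -> exists2 e : R, 0 < e &
    forall y, I01 y -> `|x - y| < e -> U y.

Definition induces_standard_topology (d : R -> R -> R) : Prop :=
  forall U : set R, U `<=` I01 -> (d_open d U <-> std_open U).

Definition ptolemy_eq (d : R -> R -> R) : Prop :=
  forall x1 x2 x3 x4, I01 x1 -> I01 x4 -> x1 <= x2 -> x2 <= x3 -> x3 <= x4 ->
    d x1 x3 * d x2 x4 = d x1 x2 * d x3 x4 + d x1 x4 * d x3 x2.

Definition ptolemy_interval (d : R -> R -> R) : Prop :=
  [/\ metric_on01 d, induces_standard_topology d & ptolemy_eq d].

Definition isometric01 (d d' : R -> R -> R) : Prop :=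
  exists f : R -> R,
    [/\ (forall x, I01 x -> I01 (f x)),
        (forall y, I01 y -> exists2 x, I01 x & f x = y) &
        (forall x y, I01 x -> I01 y -> d' (f x) (f y) = d x y)].

Definition Quad : set (R * R) := [set p | 0 <= p.1 /\ 0 <= p.2].

Definition e1 (r : R) : R * R := (r, 0).
Definition e2 (r : R) : R * R := (0, r).

Definition arg (p : R * R) : R := acos (p.1 / Num.sqrt (p.1 ^+ 2 + p.2 ^+ 2)).

Definition Tset (u w : R * R) : set (R * R) :=
  [set p | Quad p /\ exists l m : R,
     [/\ 0 <= l, 0 <= m, 1 <= l + m, m <= l + 1 & l <= m + 1] /\
     p = (l * u.1 + m * w.1, l * u.2 + m * w.2)].

Definition swap_pt (p : R * R) : R * R := (p.2, p.1).
Definition reflect_set (A : set (R * R)) : set (R * R) := swap_pt @` A.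

Definition bounded_set2 (A : set (R * R)) : Prop :=
  exists M : R, forall p, A p -> `|p.1| <= M /\ `|p.2| <= M.

Definition convex_set2 (A : set (R * R)) : Prop :=
  forall p q, A p -> A q -> forall l : R, 0 <= l -> l <= 1 ->
    A ((1 - l) * p.1 + l * q.1, (1 - l) * p.2 + l * q.2).

Definition convex_curve (p : R -> R * R) (a b : R * R) : Prop :=
  let img := p @` I01 in
  [/\ {within I01, continuous p},
      (forall t, I01 t -> Quad (p t) /\ p t <> (0, 0)),
      (forall s t, I01 s -> I01 t -> s < t -> arg (p s) < arg (p t)),
      p 0 = a /\ p 1 = b &
      (forall x, (Quad `\` img) x ->
         bounded_set2 (connected_component (Quad `\` img) x) ->
         convex_set2 (connected_component (Quad `\` img) x))].

Definition convex_curve_set (r : R) (A : set (R * R)) : Prop :=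
  exists p : R -> R * R,
    [/\ convex_curve p (e1 r) (e2 r), p @` I01 = A & A `<=` Tset (e1 r) (e2 r)].

Definition curve_of (d : R -> R -> R) : set (R * R) :=
  (fun t => (d t 1, d t 0)) @` I01.

End Defs.

(* Ptolemy's equality for 0 <= x <= y <= 1 says that the cross product of
   p_x = (d(x,1), d(x,0)) and p_y is R d(x,y).  Hence d is recovered from its
   curve as d(x,y) = |p_x x p_y| / R, so the curve determines ([0,1], d) up to
   the reversal of [0,1], which swaps the coordinates of the curve.  Under this
   dictionary, positivity of d is the strict monotonicity of the polar angle,
   the triangle inequalities with the endpoints 0 and 1 place the curve in
   T(e_R^1, e_R^2), and the triangle inequality d(s,u) <= d(s,t) + d(t,u) for
   s <= t <= u is subadditivity of the cross product along the curve, which is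
   equivalent to convexity of the region between the axes and the curve.
   Conversely, for a convex curve in T, |p_x x p_y| / R is a metric (inside T
   the other two triangle inequalities follow from subadditivity), it induces
   the standard topology because the angle is a continuous and strictly
   monotone function of the parameter, and it satisfies Ptolemy's equality by
   the Pluecker identity for 2x2 determinants. *)

From HB Require Import structures.
From mathcomp Require Import all_boot all_order all_algebra.
From mathcomp Require Import all_classical all_reals all_analysis.
From mathcomp Require Import ring lra.
Import Order.TTheory GRing.Theory Num.Theory.
Import numFieldNormedType.Exports.
Set Implicit Arguments. Unset Strict Implicit. Unset Printing Implicit Defensive.
Local Open Scope classical_set_scope.
Local Open Scope ring_scope.

Section UnitInterval.
Variable R : realType.
Implicit Types (s t u x y e : R) (f g : R -> R).

Lemma I01P t : I01 t <-> 0 <= t <= 1.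
Proof. by rewrite /I01 /= in_itv. Qed.

Lemma in_I01 t : t \in `[0, 1]%R <-> I01 t.
Proof. by rewrite I01P in_itv. Qed.

Lemma I01_0 : I01 (0 : R).
Proof. by apply/I01P; rewrite lexx ler01. Qed.

Lemma I01_1 : I01 (1 : R).
Proof. by apply/I01P; rewrite lexx ler01. Qed.

Lemma I01_between s t u : I01 s -> I01 u -> s <= t -> t <= u -> I01 t.
Proof.
move=> /I01P/andP[s0 _] /I01P/andP[_ u1] st tu.
by apply/I01P; rewrite (le_trans s0 st) (le_trans tu u1).
Qed.

Definition continuous01 f := forall t, I01 t -> forall e, 0 < e ->
  exists2 d, 0 < d & forall s, I01 s -> `|t - s| < d -> `|f t - f s| < e.

Lemma continuous01_within f a b :
  continuous01 f -> 0 <= a -> b <= 1 -> {within `[a, b], continuous f}.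
Proof.
move=> fc a0 b1; have abI s : s \in `[a, b] -> I01 s.
  by rewrite in_itv => /andP[aS sB]; apply/I01P; rewrite (le_trans a0 aS) (le_trans sB b1).
apply/subspace_continuousP => t /abI It; apply/cvg_ballP => e e0.
have [d d0 Hd] := fc t It e e0.
rewrite /prop_near1 /within /= nbhs_simpl /=.
by apply/nbhs_ballP; exists d => // s ts /abI Is; apply: Hd.
Qed.

Lemma within_continuous01P (p : R -> R * R) : {within I01 (R:=R), continuous p} <->
  continuous01 (fun t => (p t).1) /\ continuous01 (fun t => (p t).2).
Proof.
rewrite subspace_continuousP; split.
- move=> pc; split=> t It e e0; have := cvg_ball (pc t It) e0;
    rewrite /prop_near1 /within /= nbhs_simpl /= =>
    /(_ (within_filter _ _))/nbhs_ballP[d d0 Hd];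
    by exists d => // s Is ts; have [] := Hd s ts Is.
- move=> [pc1 pc2] t It; apply/cvg_ballP => e e0.
  have [d1 d10 Hd1] := pc1 t It e e0; have [d2 d20 Hd2] := pc2 t It e e0.
  have d0 : 0 < Num.min d1 d2 :> R by rewrite lt_min d10 d20.
  rewrite /prop_near1 /within /= nbhs_simpl /=; apply/nbhs_ballP.
  exists (Num.min d1 d2) => //.
  move=> s; rewrite /ball /= lt_min => /andP[s1 s2] Is.
  by split; [exact: Hd1|exact: Hd2].
Qed.

Lemma continuous01D f g :
  continuous01 f -> continuous01 g -> continuous01 (fun t => f t + g t).
Proof.
move=> fc gc t It e e0; have e20 : 0 < e / 2 by rewrite divr_gt0.
have [d1 d10 H1] := fc t It _ e20; have [d2 d20 H2] := gc t It _ e20.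
exists (Num.min d1 d2); first by rewrite lt_min d10 d20.
move=> s Is; rewrite lt_min => /andP[s1 s2].
rewrite opprD addrACA (le_lt_trans (ler_normD _ _)) // (splitr e).
by rewrite ltrD ?H1 ?H2.
Qed.

Lemma continuous01Mr f c : continuous01 f -> continuous01 (fun t => f t * c).
Proof.
move=> fc t It e e0; have c0 : 0 < `|c| + 1 by rewrite ltr_wpDl.
have [d d0 Hd] := fc t It (e / (`|c| + 1)) (divr_gt0 e0 c0).
exists d => // s Is ts; rewrite -mulrBl normrM.
apply: (@le_lt_trans _ _ (`|f t - f s| * (`|c| + 1))).
  by rewrite ler_wpM2l // lerDl.
by rewrite -ltr_pdivlMr // Hd.
Qed.

Lemma eq_continuous01 f g : f =1 g -> continuous01 f -> continuous01 g.
Proof.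
move=> fg fc t It e e0; have [d d0 Hd] := fc t It e e0.
by exists d => // s Is ts; rewrite -!fg Hd.
Qed.

Lemma increasing01_inverse_near f x e :
  (forall s t, I01 s -> I01 t -> s < t -> f s < f t) -> I01 x -> 0 < e ->
  exists2 rho, 0 < rho & forall y, I01 y -> `|f y - f x| < rho -> `|y - x| < e.
Proof.
move=> fI Ix e0; have /I01P/andP[x0 x1] := Ix.
have fle s t : I01 s -> I01 t -> s <= t -> f s <= f t.
  by move=> Is It; rewrite le_eqVlt => /orP[/eqP->//|/fI-/(_ Is It)/ltW].
have e20 : 0 < e / 2 by rewrite divr_gt0.
have e2e : e / 2 < e by rewrite ltr_pdivrMr // ltr_pMr // ltr1n.
have [r1 r10 H1] : exists2 r1, 0 < r1 &
    forall y, I01 y -> x + e <= y -> r1 <= f y - f x.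
  case: (lerP (x + e / 2) 1) => hx; last first.
    by exists 1 => // y /I01P/andP[_ y1] hy; exfalso; lra.
  have Ixe : I01 (x + e / 2) by apply/I01P; rewrite hx andbT addr_ge0 // ltW.
  exists (f (x + e / 2) - f x); first by rewrite subr_gt0 fI // ltrDl.
  by move=> y Iy hy; rewrite lerD2r fle //; lra.
have [r0 r00 H0] : exists2 r0, 0 < r0 &
    forall y, I01 y -> y <= x - e -> r0 <= f x - f y.
  case: (lerP 0 (x - e / 2)) => hx; last first.
    by exists 1 => // y /I01P/andP[y0 _] hy; exfalso; lra.
  have Ixe : I01 (x - e / 2) by apply/I01P; rewrite hx /=; lra.
  exists (f x - f (x - e / 2)); first by rewrite subr_gt0 fI //; lra.
  by move=> y Iy hy; rewrite lerD2l lerN2 fle //; lra.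
exists (Num.min r1 r0); first by rewrite lt_min r10 r00.
move=> y Iy; rewrite lt_min !ltr_norml => /andP[/andP[_ h1] /andP[h0 _]].
apply/andP; split; rewrite ltNge; apply/negP => hy.
- have /(H0 y Iy) : y <= x - e by lra.
  lra.
- have /(H1 y Iy) : x + e <= y by lra.
  lra.
Qed.

End UnitInterval.

Section PlaneGeometry.
Variable R : realType.
Implicit Types (u v w z : R * R) (k l : R).

Definition cross u w := u.1 * w.2 - u.2 * w.1.

Definition dilate l u := (l * u.1, l * u.2).

(* A reparametrisation of the polar angle on [Quad] that is rational in the
   coordinates, hence easier to handle than [arg]. *)
Definition angle_coord u := u.2 / (u.1 + u.2).

Lemma crossC u w : cross u w = - cross w u.
Proof. rewrite /cross; ring. Qed.

Lemma dilate1 u : dilate 1 u = u.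
Proof. by case: u => a b; rewrite /dilate !mul1r. Qed.

Lemma dilate_continuous u : continuous (fun l => dilate l u).
Proof.
move=> l; apply: (cvg_pair (G := nbhs (l * u.1)) (H := nbhs (l * u.2))).
all: exact: mulrr_continuous.
Qed.

Lemma dilate_of_cross_eq0 u z : u.1 + u.2 != 0 -> cross u z = 0 ->
  z = dilate ((z.1 + z.2) / (u.1 + u.2)) u.
Proof.
rewrite /cross /dilate; case: z => z1 z2 /= u0 e.
by congr pair; rewrite mulrAC -[LHS](mulfK u0); congr (_ / _); nra.
Qed.

Lemma angle_coord_diff u w : u.1 + u.2 != 0 -> w.1 + w.2 != 0 ->
  angle_coord w - angle_coord u = cross u w / ((u.1 + u.2) * (w.1 + w.2)).
Proof. by move=> u0 w0; rewrite /angle_coord /cross; field; rewrite u0 w0. Qed.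

Lemma angle_coord_dilate k u : k != 0 -> u.1 + u.2 != 0 ->
  angle_coord (dilate k u) = angle_coord u.
Proof.
move=> k0 u0; rewrite /angle_coord /dilate /=.
by field; apply/andP; split=> //; rewrite -mulrDr mulf_neq0.
Qed.

Lemma angle_coord_continuous v : v.1 + v.2 != 0 -> {for v, continuous angle_coord}.
Proof.
move=> v0; apply: continuousM; first exact: cvg_snd.
by apply: continuousV => //; apply: continuousD; [exact: cvg_fst|exact: cvg_snd].
Qed.

Lemma angle_coord_near v rho : v.1 + v.2 != 0 -> 0 < rho ->
  exists2 e, 0 < e & forall w, `|v.1 - w.1| < e -> `|v.2 - w.2| < e ->
    `|angle_coord v - angle_coord w| < rho.
Proof.
move=> v0 rho0.
have /cvgr_dist_lt/(_ rho rho0)/nbhs_ballP[e e0 He] := angle_coord_continuous v0.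
by exists e => // w h1 h2; apply: He.
Qed.

(* [cos] is decreasing on [[0, pi]], so comparing the angles amounts to comparing
   [u.1 / |u|] with [w.1 / |w|], i.e. the squares of [w.1 |u|] and [u.1 |w|]. *)
Lemma arg_lt_cross u w : Quad u -> Quad w -> u <> (0, 0) -> w <> (0, 0) ->
  (arg u < arg w <-> 0 < cross u w).
Proof.
have norm_gt0 (a b : R) : 0 <= a -> 0 <= b -> (a, b) <> (0, 0) -> 0 < a ^+ 2 + b ^+ 2.
  move=> a0 b0 ab; rewrite lt_def (addr_ge0 (sqr_ge0 a) (sqr_ge0 b)) andbT.
  apply: contra_notN ab; rewrite paddr_eq0 ?sqr_ge0 // !sqrf_eq0.
  by move=> /andP[/eqP-> /eqP->].
have cos_arg (a b : R) : 0 <= a -> 0 < a ^+ 2 + b ^+ 2 -> exists N : R,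
    [/\ Num.sqrt (a ^+ 2 + b ^+ 2) = N, 0 < N, N ^+ 2 = a ^+ 2 + b ^+ 2,
        0 <= acos (a / N) <= pi & cos (acos (a / N)) = a / N].
  move=> a0 ab; exists (Num.sqrt (a ^+ 2 + b ^+ 2)).
  have N0 : 0 < Num.sqrt (a ^+ 2 + b ^+ 2) by rewrite sqrtr_gt0.
  have aN : a <= Num.sqrt (a ^+ 2 + b ^+ 2).
    rewrite -[X in X <= _]ger0_norm // -sqrtr_sqr ler_sqrt ?lerDl ?sqr_ge0 //.
    by rewrite addr_ge0 ?sqr_ge0.
  have [] := @acos_def R (a / Num.sqrt (a ^+ 2 + b ^+ 2)).
    by rewrite ler_pdivrMr // mul1r aN andbT (le_trans _ (divr_ge0 a0 (ltW N0))) // lerN10.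
  by split=> //; rewrite sqr_sqrtr // ltW.
case: u => u1 u2; case: w => w1 w2 [/= u10 u20] [/= w10 w20] un wn.
have [Nu [eNu Nu0 Nu2 Au cu]] := cos_arg _ _ u10 (norm_gt0 _ _ u10 u20 un).
have [Nw [eNw Nw0 Nw2 Aw cw]] := cos_arg _ _ w10 (norm_gt0 _ _ w10 w20 wn).
rewrite /arg /cross /= eNu eNw -ltr_cos ?in_itv ?Au ?Aw // cw cu.
rewrite ltr_pdivrMr // mulrAC ltr_pdivlMr //.
rewrite -(ltr_pXn2r (isT : (0 < 2)%N)) ?nnegrE ?mulr_ge0 ?(ltW Nu0) ?(ltW Nw0) //=.
rewrite (exprMn 2 w1) (exprMn 2 u1) Nu2 Nw2 subr_gt0.
have uw1 : 0 <= u1 * w2 by rewrite mulr_ge0.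
have uw2 : 0 <= u2 * w1 by rewrite mulr_ge0.
by split=> h; nra.
Qed.

End PlaneGeometry.

Lemma swap_ptK (R : realType) : involutive (@swap_pt R).
Proof. by case. Qed.

Lemma in_Tset_e12 (R : realType) (r : R) (z : R * R) : 0 < r ->
  Tset (e1 r) (e2 r) z <->
  [/\ Quad z, r <= z.1 + z.2, z.2 <= z.1 + r & z.1 <= z.2 + r].
Proof.
move=> r0; rewrite /Tset /e1 /e2 /=; split.
- move=> [Qz [l [m [[l0 m0 lm1 ml lm] ez]]]].
  by split=> //; rewrite ez /= !mulr0 addr0 add0r; nra.
- case: z => a b /= [Qz h1 h2 h3]; split=> //.
  exists (a / r), (b / r); rewrite !mulr0 addr0 add0r !divfK ?gt_eqF //.
  case: Qz => /= a0 b0; split=> //; split.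
  + exact: divr_ge0 a0 (ltW r0).
  + exact: divr_ge0 b0 (ltW r0).
  + by rewrite -mulrDl ler_pdivlMr // mul1r.
  + by rewrite ler_pdivrMr // mulrDl divfK ?gt_eqF // mul1r.
  + by rewrite ler_pdivrMr // mulrDl divfK ?gt_eqF // mul1r.
Qed.

Section SweepingCurve.
Variables (R : realType) (r : R) (p : R -> R * R).
Implicit Types (s t u k l d eta : R) (v w z : R * R).

Definition sweeping_curve :=
  [/\ 0 < r, continuous01 (fun t => (p t).1) /\ continuous01 (fun t => (p t).2),
      (forall t, I01 t -> [/\ 0 <= (p t).1, 0 <= (p t).2 & 0 < (p t).1 + (p t).2]),
      (forall s t, I01 s -> I01 t -> s < t -> 0 < cross (p s) (p t)) &
      p 0 = (r, 0) /\ p 1 = (0, r)].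

Definition inner_region : set (R * R) :=
  [set z | exists t l, [/\ I01 t, 0 <= l, l < 1 & z = dilate l (p t)]].

Definition outer_region : set (R * R) :=
  [set z | exists t l, [/\ I01 t, 1 < l & z = dilate l (p t)]].

Definition cross_subadditive := forall s t u, I01 s -> I01 u -> s <= t -> t <= u ->
  cross (p s) (p u) <= cross (p s) (p t) + cross (p t) (p u).

Definition curve_in_T := forall t, I01 t ->
  [/\ r <= (p t).1 + (p t).2, (p t).2 <= (p t).1 + r & (p t).1 <= (p t).2 + r].

Definition cross_dist x y := `|cross (p x) (p y)|.

Hypothesis hp : sweeping_curve.

Lemma curve_quad t : I01 t ->
  [/\ 0 <= (p t).1, 0 <= (p t).2 & 0 < (p t).1 + (p t).2].
Proof. by case: hp => _ _ + _ _; apply. Qed.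

Lemma curve_weight_neq0 t : I01 t -> (p t).1 + (p t).2 != 0.
Proof. by move=> /curve_quad[_ _ /gt_eqF->]. Qed.

Lemma cross_curve_gt0 s t : I01 s -> I01 t -> s < t -> 0 < cross (p s) (p t).
Proof. by case: hp => _ _ _ + _; apply. Qed.

Lemma cross_curve_ge0 s t : I01 s -> I01 t -> s <= t -> 0 <= cross (p s) (p t).
Proof.
move=> Is It; rewrite le_eqVlt => /orP[/eqP <-|/(cross_curve_gt0 Is It)/ltW //].
by rewrite /cross mulrC subrr.
Qed.

Lemma cross_curve_eq0 s t : I01 s -> I01 t -> cross (p s) (p t) = 0 -> s = t.
Proof.
move=> Is It e; case: (ltgtP s t) => // st.
- by have := cross_curve_gt0 Is It st; rewrite e ltxx.
- by have := cross_curve_gt0 It Is st; rewrite crossC e oppr0 ltxx.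
Qed.

Lemma cross_curve_continuous01 z : continuous01 (fun t => cross (p t) z).
Proof.
have [_ [pc1 pc2] _ _ _] := hp.
apply: eq_continuous01 (continuous01D (continuous01Mr z.2 pc1)
  (continuous01Mr (- z.1) pc2)) => t.
by rewrite /cross mulrN.
Qed.

Lemma ray_meets_curve_between s u z : I01 s -> I01 u -> s <= u ->
  0 <= cross (p s) z -> cross (p u) z <= 0 ->
  exists t, [/\ I01 t, s <= t, t <= u &
    z = dilate ((z.1 + z.2) / ((p t).1 + (p t).2)) (p t)].
Proof.
move=> Is Iu su h1 h2; have cc := cross_curve_continuous01 z.
have /I01P/andP[s0 _] := Is; have /I01P/andP[_ u1] := Iu.
have h0 : Num.min (cross (p s) z) (cross (p u) z) <= 0 <=
    Num.max (cross (p s) z) (cross (p u) z) by rewrite ge_min le_max h2 h1 orbT.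
have [c] := IVT su (continuous01_within cc s0 u1) h0.
rewrite in_itv /= => /andP[sc cu] e; have Ic := I01_between Is Iu sc cu.
by exists c; split=> //; apply: (dilate_of_cross_eq0 _ e); exact: curve_weight_neq0.
Qed.

Lemma ray_meets_curve z : Quad z ->
  exists t, I01 t /\ z = dilate ((z.1 + z.2) / ((p t).1 + (p t).2)) (p t).
Proof.
move=> [z1 z2]; have [r0 _ _ _ [p0 p1]] := hp.
have [||t [It _ _ e]] := @ray_meets_curve_between 0 1 z (I01_0 R) (I01_1 R) ler01.
- by rewrite p0 /cross /=; nra.
- by rewrite p1 /cross /=; nra.
by exists t.
Qed.

Lemma dilate_curve_inj t t' l l' : I01 t -> I01 t' -> 0 < l ->
  dilate l (p t) = dilate l' (p t') -> t = t' /\ l = l'.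
Proof.
move=> It It' l0 [e1 e2].
have [_ _ a3] := curve_quad It; have [_ _ b3] := curve_quad It'.
have l'0 : l' != 0.
  apply/eqP => l'e; have := mulr_gt0 l0 a3.
  by rewrite mulrDr e1 e2 l'e !mul0r addr0 ltxx.
have tt : t' = t.
  apply: cross_curve_eq0 => //; apply: (mulfI l'0).
  by rewrite mulr0 /cross mulrBr !mulrA -e1 -e2; ring.
split=> //; subst t'; apply/eqP.
have /eqP : (l - l') * ((p t).1 + (p t).2) = 0 by rewrite mulrBl !mulrDr e1 e2 subrr.
by rewrite mulf_eq0 (gt_eqF a3) orbF subr_eq0.
Qed.

Lemma inner_region_sub : inner_region `<=` Quad (R:=R) `\` p @` I01 (R:=R).
Proof.
move=> z [t [l [It l0 l1 ->]]]; have [a1 a2 a3] := curve_quad It.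
split; first by split; apply: mulr_ge0.
move=> [t' It' e]; case: (ltgtP 0 l) l0 => // [l0 _|l0 _].
- have [_ l1'] := dilate_curve_inj It It' l0 (etrans (esym e) (esym (dilate1 _))).
  by move: l1; rewrite l1' ltxx.
- have [_ _] := curve_quad It'.
  by rewrite e /dilate -l0 !mul0r /= addr0 ltxx.
Qed.

Lemma outer_region_sub : outer_region `<=` Quad (R:=R) `\` p @` I01 (R:=R).
Proof.
move=> z [t [l [It l1 ->]]]; have [a1 a2 _] := curve_quad It.
have l0 : 0 < l by apply: lt_trans l1.
split; first by split; apply: mulr_ge0 => //; apply: ltW.
move=> [t' It' e].
have [_ l1'] := dilate_curve_inj It It' l0 (etrans (esym e) (esym (dilate1 _))).
by move: l1; rewrite l1' ltxx.
Qed.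

Lemma inner_outer_disjoint z : inner_region z -> outer_region z -> False.
Proof.
move=> [t [l [It l0 l1 ->]]] [t' [l' [It' l'1 e]]].
have [_ ll'] := dilate_curve_inj It' It (lt_trans ltr01 l'1) (esym e).
by move: (lt_trans l1 l'1); rewrite ll' ltxx.
Qed.

Lemma quad_minus_curve_sub :
  Quad (R:=R) `\` p @` I01 (R:=R) `<=` inner_region `|` outer_region.
Proof.
move=> z [[z1 z2] nz]; have [t [It e]] := ray_meets_curve (conj z1 z2).
have [_ _ a3] := curve_quad It.
set k := (z.1 + z.2) / ((p t).1 + (p t).2) in e.
have k0 : 0 <= k by apply: divr_ge0; [exact: addr_ge0|exact: ltW].
case: (ltgtP k 1) => hk; [left|right|]; try by exists t, k.
by exfalso; apply: nz; exists t; rewrite // e hk dilate1.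
Qed.

Lemma inner_region0 : inner_region (0, 0).
Proof. by exists 0, 0; split=> //; [exact: I01_0|rewrite /dilate !mul0r]. Qed.

Lemma angle_coord_curve_lt s t : I01 s -> I01 t -> s < t ->
  angle_coord (p s) < angle_coord (p t).
Proof.
move=> Is It st; have [_ _ hs] := curve_quad Is; have [_ _ ht] := curve_quad It.
rewrite -subr_gt0 angle_coord_diff ?gt_eqF //.
by rewrite divr_gt0 ?mulr_gt0 ?cross_curve_gt0.
Qed.

Lemma curve_weight_bounds :
  (exists2 m, 0 < m & forall t, I01 t -> m <= (p t).1 + (p t).2) /\
  (exists M, forall t, I01 t -> (p t).1 + (p t).2 <= M).
Proof.
have [_ [pc1 pc2] _ _ _] := hp.
have cS := continuous01_within (continuous01D pc1 pc2) (lexx 0) (lexx 1).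
split.
- have [c /in_I01 Ic Hc] := EVT_min ler01 cS; have [_ _ c0] := curve_quad Ic.
  by exists ((p c).1 + (p c).2) => // t /in_I01; apply: Hc.
- have [c _ Hc] := EVT_max ler01 cS.
  by exists ((p c).1 + (p c).2) => t /in_I01; apply: Hc.
Qed.

(* The parameter depends continuously on the angle, which is strictly increasing
   along the curve and invariant under dilation. *)
Lemma curve_param_near t0 l d : I01 t0 -> 0 < l -> 0 < d ->
  exists2 eps, 0 < eps & forall w t k,
    `|(dilate l (p t0)).1 - w.1| < eps -> `|(dilate l (p t0)).2 - w.2| < eps ->
    I01 t -> w = dilate k (p t) -> `|t - t0| < d.
Proof.
move=> It0 l0 d0; have [a1 a2 a3] := curve_quad It0.
have [rho rho0 Hrho] := increasing01_inverse_near angle_coord_curve_lt It0 d0.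
set v := dilate l (p t0).
have vS : 0 < v.1 + v.2 by rewrite /= -mulrDr mulr_gt0.
have [e1 e10 He1] := angle_coord_near (lt0r_neq0 vS) rho0.
exists (Num.min e1 ((v.1 + v.2) / 2)); first by rewrite lt_min e10 divr_gt0.
move=> w t k; rewrite !lt_min => /andP[h1 h1'] /andP[h2 h2'] It ew.
have [_ _ b3] := curve_quad It.
have wS : 0 < w.1 + w.2 by move: h1' h2'; rewrite !ltr_norml; lra.
have k0 : k != 0 by apply: contraTneq wS => k0; rewrite ew k0 /= !mul0r addr0 ltxx.
apply: Hrho => //; rewrite distrC.
have -> : angle_coord (p t) = angle_coord w.
  by rewrite ew angle_coord_dilate ?(curve_weight_neq0 It).
have -> : angle_coord (p t0) = angle_coord v.
  by rewrite angle_coord_dilate ?(lt0r_neq0 l0) ?(curve_weight_neq0 It0).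
exact: He1.
Qed.

(* The last two conditions say that [w] is the dilate of [p t] by a factor
   within [eta] of [l]. *)
Lemma dilate_curve_near t0 l eta : I01 t0 -> 0 < l -> 0 < eta ->
  exists2 eps, 0 < eps & forall w, Quad w ->
    `|(dilate l (p t0)).1 - w.1| < eps -> `|(dilate l (p t0)).2 - w.2| < eps ->
    exists t, [/\ I01 t, w = dilate ((w.1 + w.2) / ((p t).1 + (p t).2)) (p t),
      (l - eta) * ((p t).1 + (p t).2) < w.1 + w.2 &
      w.1 + w.2 < (l + eta) * ((p t).1 + (p t).2)].
Proof.
move=> It0 l0 eta0; have [_ [pc1 pc2] _ _ _] := hp.
have [a1 a2 a3] := curve_quad It0; set S0 := (p t0).1 + (p t0).2 in a3.
have le0 : 0 < l + eta by rewrite addr_gt0.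
have tol0 : 0 < eta * S0 / (2 * (l + eta)) by rewrite !(divr_gt0, mulr_gt0).
have [d d0 Hd] := continuous01D pc1 pc2 It0 tol0.
have [e2 e20 He2] := curve_param_near It0 l0 d0.
have e30 : 0 < eta * S0 / 4 by rewrite !(divr_gt0, mulr_gt0).
exists (Num.min e2 (eta * S0 / 4)); first by rewrite lt_min e20 e30.
move=> w Qw; rewrite !lt_min => /andP[h1 h1'] /andP[h2 h2'].
have [t [It ew]] := ray_meets_curve Qw; exists t.
have /(Hd t It) hS : `|t0 - t| < d by rewrite distrC (He2 w t _ h1 h2 It ew).
move: hS h1' h2'; rewrite ltr_pdivlMr ?mulr_gt0 // /= !ltr_norml.
set D := S0 - _ => hS /andP[q1 q2] /andP[q3 q4].
have hD1 : `|(l - eta) * D| <= (l + eta) * `|D|.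
  by rewrite normrM ler_wpM2r // ler_norml; apply/andP; split; lra.
have hD2 : `|(l + eta) * D| <= (l + eta) * `|D| by rewrite normrM gtr0_norm.
by split=> //; move: hD1 hD2 hS q1 q2 q3 q4; rewrite !ler_norml /D /S0 =>
  /andP[? ?] /andP[? ?] *; lra.
Qed.

Lemma outer_region_open v : outer_region v -> exists2 eps, 0 < eps &
  forall w, Quad w -> `|v.1 - w.1| < eps -> `|v.2 - w.2| < eps -> outer_region w.
Proof.
move=> [t0 [l [It0 l1 ->]]]; have l10 : 0 < l - 1 by rewrite subr_gt0.
have [eps eps0 He] := dilate_curve_near It0 (lt_trans ltr01 l1) l10.
exists eps => // w Qw h1 h2; have [t [It ew lw _]] := He w Qw h1 h2.
have [_ _ b3] := curve_quad It.
exists t, ((w.1 + w.2) / ((p t).1 + (p t).2)); split=> //.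
by rewrite ltr_pdivlMr // mul1r; lra.
Qed.

Lemma inner_region_open z : inner_region z -> exists2 eps, 0 < eps &
  forall w, Quad w -> `|z.1 - w.1| < eps -> `|z.2 - w.2| < eps -> inner_region w.
Proof.
move=> [t0 [l [It0 l0 l1 ->]]].
suff near_weight : exists2 eps, 0 < eps & forall w, Quad w ->
    `|(dilate l (p t0)).1 - w.1| < eps -> `|(dilate l (p t0)).2 - w.2| < eps ->
    exists t, [/\ I01 t, w = dilate ((w.1 + w.2) / ((p t).1 + (p t).2)) (p t) &
      w.1 + w.2 < (p t).1 + (p t).2].
  have [eps eps0 He] := near_weight; exists eps => // w [w1 w2] h1 h2.
  have [t [It ew lw]] := He w (conj w1 w2) h1 h2; have [_ _ b3] := curve_quad It.
  exists t, ((w.1 + w.2) / ((p t).1 + (p t).2)); split=> //.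
    by apply: divr_ge0; [exact: addr_ge0|exact: ltW].
  by rewrite ltr_pdivrMr // mul1r.
case: (ltgtP 0 l) l0 => // [lpos _|<- _].
  have l10 : 0 < 1 - l by rewrite subr_gt0.
  have [eps eps0 He] := dilate_curve_near It0 lpos l10.
  exists eps => // w Qw h1 h2; have [t [It ew _ lw]] := He w Qw h1 h2.
  by exists t; split=> //; lra.
have [[m m0 Hm] _] := curve_weight_bounds.
exists (m / 2); first by rewrite divr_gt0.
move=> w [w1 w2]; rewrite /dilate /= !mul0r !sub0r !normrN !ger0_norm // => h1 h2.
have [t [It ew]] := ray_meets_curve (conj w1 w2).
by exists t; split=> //; have := Hm t It; lra.
Qed.

Lemma inner_outer_separated : separated inner_region outer_region.
Proof.
have ball_coord v e w : ball v e w -> `|v.1 - w.1| < e /\ `|v.2 - w.2| < e by [].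
split; rewrite -subset0.
- move=> v [cv Vv]; have [e e0 He] := outer_region_open Vv.
  have [w [Uw /ball_coord[b1 b2]]] := cv _ (nbhsx_ballx v e e0).
  have [Qw _] := inner_region_sub Uw.
  exact: (inner_outer_disjoint Uw (He w Qw b1 b2)).
- move=> z [Uz cz]; have [e e0 He] := inner_region_open Uz.
  have [w [Vw /ball_coord[b1 b2]]] := cz _ (nbhsx_ballx z e e0).
  have [Qw _] := outer_region_sub Vw.
  exact: (inner_outer_disjoint (He w Qw b1 b2) Vw).
Qed.

Lemma inner_region_connected : connected inner_region.
Proof.
have -> : inner_region =
    \bigcup_(t in I01 (R:=R)) ((fun l => dilate l (p t)) @` `[0, 1[%classic).
  apply/seteqP; split.
  - move=> z [t [l [It l0 l1 ->]]]; exists t => //; exists l => //.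
    by rewrite /= in_itv /= l0 l1.
  - move=> z [t It [l]]; rewrite /= in_itv /= => /andP[l0 l1] <-.
    by exists t, l.
apply: bigcup_connected.
- exists (0, 0) => t It; exists 0; first by rewrite /= in_itv /= lexx ltr01.
  by rewrite /dilate !mul0r.
- move=> t It; apply: connected_continuous_connected.
  + by apply/connected_intervalP; apply: interval_is_interval.
  + by apply: continuous_subspaceT; apply: dilate_continuous.
Qed.

Lemma component_inner_region x : inner_region x ->
  connected_component (Quad (R:=R) `\` p @` I01 (R:=R)) x = inner_region.
Proof.
move=> Ux; apply/seteqP; split.
- have sub : connected_component (Quad (R:=R) `\` p @` I01 (R:=R)) x `<=`
      inner_region `|` outer_region.
    by apply: subset_trans quad_minus_curve_sub; apply: connected_component_sub.
  have [//|h] := connected_subset inner_outer_separated sub (@component_connected _ _ x).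
  exfalso; apply: (inner_outer_disjoint Ux); apply: h.
  exact/connected_component_refl/inner_region_sub.
- apply: connected_component_max => //.
  + exact: inner_region_sub.
  + exact: inner_region_connected.
Qed.

Lemma inner_region_bounded : bounded_set2 inner_region.
Proof.
have [_ [M HM]] := curve_weight_bounds; exists M => z [t [l [It l0 l1 ->]]].
have [a1 a2 _] := curve_quad It; have := HM t It.
rewrite /dilate /= !ger0_norm ?mulr_ge0 //.
have : l * (p t).1 <= (p t).1 by apply: ler_piMl => //; exact: ltW.
have : l * (p t).2 <= (p t).2 by apply: ler_piMl => //; exact: ltW.
by split; lra.
Qed.

(* The ray [{c v | c >= 1}] is a connected subset of the outer region through [v]. *)
Lemma component_outer_unbounded v : outer_region v ->
  ~ bounded_set2 (connected_component (Quad (R:=R) `\` p @` I01 (R:=R)) v).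
Proof.
move=> Vv [M HM]; have [t [l [It l1 ev]]] := Vv.
have [a1 a2 a3] := curve_quad It; have l0 : 0 < l by apply: lt_trans l1.
have vS : 0 < v.1 + v.2 by rewrite ev /= -mulrDr mulr_gt0.
have [v1 v2] : 0 <= v.1 /\ 0 <= v.2 by rewrite ev; split; apply: mulr_ge0 => //; exact: ltW.
set N := 2 * (`|M| + 1) / (v.1 + v.2) + 1.
have N1 : 1 <= N.
  by rewrite lerDr; apply: divr_ge0; [rewrite mulr_ge0 ?addr_ge0|exact: ltW].
have /HM : connected_component (Quad (R:=R) `\` p @` I01 (R:=R)) v (dilate N v).
  have sub : (fun c => dilate c v) @` `[1, N]%classic `<=`
      connected_component (Quad (R:=R) `\` p @` I01 (R:=R)) v.
    apply: connected_component_max.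
    - by exists 1; [rewrite /= in_itv /= lexx N1 | rewrite dilate1].
    - move=> z [c]; rewrite /= in_itv /= => /andP[c1 _] <-.
      apply: outer_region_sub; exists t, (c * l); split => //; first nra.
      by rewrite ev /dilate /= !mulrA.
    - apply: connected_continuous_connected; first exact: segment_connected.
      by apply: continuous_subspaceT; apply: dilate_continuous.
  by apply: sub; exists N => //; rewrite /= in_itv /= N1 lexx.
have eN : N * (v.1 + v.2) = 2 * (`|M| + 1) + (v.1 + v.2).
  by rewrite mulrDl mul1r divfK // gt_eqF.
rewrite /dilate /= !ger0_norm ?mulr_ge0 ?(le_trans _ N1) //.
by have := ler_norm M; nra.
Qed.

Lemma inner_region_combination s u a b : cross_subadditive ->
  I01 s -> I01 u -> s <= u -> 0 <= a -> 0 <= b -> a + b < 1 ->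
  inner_region (a * (p s).1 + b * (p u).1, a * (p s).2 + b * (p u).2).
Proof.
move=> sub Is Iu su a0 b0 ab1.
have [a1 a2 _] := curve_quad Is; have [b1 b2 _] := curve_quad Iu.
case: (ltgtP s u) su => // [su _|<- _]; last first.
  by exists s, (a + b); split; rewrite ?addr_ge0 // /dilate !mulrDl.
have D0 := cross_curve_gt0 Is Iu su.
set z := (_, _); have Qz : Quad z by split; apply: addr_ge0; apply: mulr_ge0.
have c1 : cross (p s) z = b * cross (p s) (p u) by rewrite /cross /=; ring.
have c2 : cross z (p u) = a * cross (p s) (p u) by rewrite /cross /=; ring.
have [||t [It st tu ez]] := ray_meets_curve_between (z := z) Is Iu (ltW su).
- by rewrite c1 mulr_ge0 // ltW.
- by rewrite crossC c2 oppr_le0 mulr_ge0 // ltW.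
have [_ _ c3] := curve_quad It; set k := _ / _ in ez.
have k0 : 0 <= k by apply: divr_ge0; [case: Qz => *; exact: addr_ge0|exact: ltW].
exists t, k; split => //.
have e1 : cross (p s) z = k * cross (p s) (p t) by rewrite {1}ez /cross /=; ring.
have e2 : cross z (p u) = k * cross (p t) (p u) by rewrite {1}ez /cross /=; ring.
have Sst := sub s t u Is Iu st tu.
have S0 : 0 < cross (p s) (p t) + cross (p t) (p u) by apply: lt_le_trans Sst.
have : k * (cross (p s) (p t) + cross (p t) (p u)) <=
    (a + b) * (cross (p s) (p t) + cross (p t) (p u)).
  by rewrite mulrDr -e1 -e2 c1 c2 -mulrDl addrC ler_wpM2l ?addr_ge0.
by rewrite ler_pM2r // => /le_lt_trans; apply.
Qed.

Lemma inner_region_convex : cross_subadditive -> convex_set2 inner_region.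
Proof.
move=> sub x y [s [a [Is a0 a1 ->]]] [u [b [Iu b0 b1 ->]]] l l0 l1.
have ab0 : 0 <= (1 - l) * a by rewrite mulr_ge0 // subr_ge0.
have bb0 : 0 <= l * b by rewrite mulr_ge0.
have ab1 : (1 - l) * a + l * b < 1.
  have : (1 - l) * a <= (1 - l) * 1 by rewrite ler_wpM2l ?subr_ge0 // ltW.
  case: (ltrP 0 l) => hl.
  - have : l * b < l * 1 by rewrite ltr_pM2l.
    lra.
  - have -> : l = 0 by lra.
    by rewrite subr0 mul1r mul0r addr0.
rewrite /dilate /= !mulrA; case: (lerP s u) => su.
  exact: inner_region_combination.
rewrite [(_ * a * _ + _)%R]addrC [(_ * a * (p s).2 + _)%R]addrC.
by apply: inner_region_combination => //; [exact: ltW|rewrite addrC].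
Qed.

Lemma cross_subadditive_of_convex : convex_set2 inner_region -> cross_subadditive.
Proof.
move=> cvx s t u Is Iu st tu; have It := I01_between Is Iu st tu.
case: (ltgtP s t) st => // [st _|<- _]; last by rewrite /cross; lra.
case: (ltgtP t u) tu => // [tu _|-> _]; last by rewrite /cross; lra.
have A0 := cross_curve_gt0 Is It st; have B0 := cross_curve_gt0 It Iu tu.
have D0 := cross_curve_gt0 Is Iu (lt_trans st tu).
set A := cross (p s) (p t) in A0 *; set B := cross (p t) (p u) in B0 *.
set D := cross (p s) (p u) in D0 *.
rewrite leNgt; apply/negP => DAB.
(* The chord between [la p s] and [la p u] crosses the ray through [p t]
   beyond the curve as soon as [la D > A + B]. *)
set la := (D + (A + B)) / (2 * D).
have laD : la * D = (D + (A + B)) / 2 by rewrite /la; field; rewrite gt_eqF.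
have la0 : 0 <= la by rewrite /la; apply: divr_ge0; lra.
have la1 : la < 1 by rewrite -(ltr_pM2r D0) laD mul1r; lra.
have [_ _ c3] := curve_quad It.
have key1 : B * (p s).1 + A * (p u).1 = D * (p t).1 by rewrite /A /B /D /cross; ring.
have key2 : B * (p s).2 + A * (p u).2 = D * (p t).2 by rewrite /A /B /D /cross; ring.
set th := A / (A + B).
have th0 : 0 <= th by rewrite /th; apply: divr_ge0; lra.
have th1 : th <= 1 by rewrite /th ler_pdivrMr; lra.
have := cvx _ _ (ex_intro _ s (ex_intro _ la (And4 Is la0 la1 erefl)))
  (ex_intro _ u (ex_intro _ la (And4 Iu la0 la1 erefl))) th th0 th1.
have -> : ((1 - th) * (dilate la (p s)).1 + th * (dilate la (p u)).1,
           (1 - th) * (dilate la (p s)).2 + th * (dilate la (p u)).2) =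
          dilate (la * D / (A + B)) (p t).
  have ABn : A + B != 0 by rewrite gt_eqF //; lra.
  rewrite /dilate /th /=; clearbody A B D la; congr pair.
  - rewrite (_ : _ * (p t).1 = la * (D * (p t).1) / (A + B)); last by field.
    by rewrite -key1; field.
  - rewrite (_ : _ * (p t).2 = la * (D * (p t).2) / (A + B)); last by field.
    by rewrite -key2; field.
move=> Uz; apply: (inner_outer_disjoint Uz); exists t, (la * D / (A + B)).
split=> //; rewrite ltr_pdivlMr ?mul1r ?laD; lra.
Qed.

Lemma cross_curve_le_T x y : curve_in_T -> I01 x -> I01 y ->
  cross (p x) (p y) <= r * ((p x).1 + (p y).1) /\
  cross (p x) (p y) <= r * ((p x).2 + (p y).2).
Proof.
move=> inT Ix Iy; have [a1 a2 _] := curve_quad Ix; have [b1 b2 _] := curve_quad Iy.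
have [_ t2 t3] := inT x Ix; have [_ u2 u3] := inT y Iy.
have h1 : 0 <= (p x).1 * ((p y).1 + r - (p y).2) by rewrite mulr_ge0 // subr_ge0.
have h2 : 0 <= (p y).1 * ((p x).2 + r - (p x).1) by rewrite mulr_ge0 // subr_ge0.
have h3 : 0 <= (p y).2 * ((p x).2 + r - (p x).1) by rewrite mulr_ge0 // subr_ge0.
have h4 : 0 <= (p x).2 * ((p y).1 + r - (p y).2) by rewrite mulr_ge0 // subr_ge0.
by rewrite /cross; split; nra.
Qed.

(* With [A], [B], [D] the crosses of [s t], [t u], [s u] and [c x := cross (p x) (p 1)
   = r (p x).1], the Pluecker identity [D c t = A c u + c s B] together with
   [c t <= B + c u] (subadditivity on [t <= u <= 1]) and [D <= c s + c u] (the curve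
   lies in T) gives [c u A <= c u (D + B)].  The next lemma is the mirror image,
   with [0] in place of [1]. *)
Lemma cross_triangle_left s t u : curve_in_T -> cross_subadditive ->
  I01 s -> I01 u -> s <= t -> t <= u ->
  cross (p s) (p t) <= cross (p s) (p u) + cross (p t) (p u).
Proof.
move=> inT sub Is Iu st tu; have It := I01_between Is Iu st tu.
have [r0 _ _ _ [_ p1]] := hp.
have [a1 _ _] := curve_quad Is; have [b1 _ _] := curve_quad It.
have [c1 _ _] := curve_quad Iu.
have A0 := cross_curve_ge0 Is It st; have B0 := cross_curve_ge0 It Iu tu.
have cr1 x : cross (p x) (p 1) = r * (p x).1 by rewrite p1 /cross /=; ring.
have /I01P/andP[_ u1] := Iu.
have H1 := sub t u 1 It (I01_1 R) tu u1; rewrite !cr1 in H1.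
have Pl : cross (p s) (p u) * (r * (p t).1) =
    cross (p s) (p t) * (r * (p u).1) + r * (p s).1 * cross (p t) (p u).
  by rewrite /cross; ring.
have [bs _] := cross_curve_le_T inT Is Iu.
case: (ltgtP 0 (p u).1) c1 => // [cu _|cu _]; last first.
  have u_1 : u = 1 by apply: (cross_curve_eq0 Iu (I01_1 R)); rewrite cr1 -cu mulr0.
  have [bst _] := cross_curve_le_T inT Is It.
  by subst u; rewrite !cr1; lra.
set A := cross (p s) (p t) in A0 Pl *; set B := cross (p t) (p u) in B0 Pl H1 *.
set D := cross (p s) (p u) in Pl bs *.
have h1 : r * (p t).1 * D <= (B + r * (p u).1) * D.
  by rewrite ler_wpM2r // /D cross_curve_ge0 // (le_trans st tu).
have h2 : B * (D - r * (p s).1) <= B * (r * (p u).1) by rewrite ler_wpM2l //; lra.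
have ru : 0 < r * (p u).1 by rewrite mulr_gt0.
have : r * (p u).1 * (A - D - B) <= 0 by nra.
by rewrite pmulr_rle0 //; lra.
Qed.

Lemma cross_triangle_right s t u : curve_in_T -> cross_subadditive ->
  I01 s -> I01 u -> s <= t -> t <= u ->
  cross (p t) (p u) <= cross (p s) (p t) + cross (p s) (p u).
Proof.
move=> inT sub Is Iu st tu; have It := I01_between Is Iu st tu.
have [r0 _ _ _ [p0 _]] := hp.
have [_ a2 _] := curve_quad Is; have [_ b2 _] := curve_quad It.
have [_ c2 _] := curve_quad Iu.
have A0 := cross_curve_ge0 Is It st; have B0 := cross_curve_ge0 It Iu tu.
have cr0 x : cross (p 0) (p x) = r * (p x).2 by rewrite p0 /cross /=; ring.
have /I01P/andP[s0 _] := Is.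
have H1 := sub 0 s t (I01_0 R) It s0 st; rewrite !cr0 in H1.
have Pl : r * (p t).2 * cross (p s) (p u) =
    r * (p s).2 * cross (p t) (p u) + r * (p u).2 * cross (p s) (p t).
  by rewrite /cross; ring.
have [_ bs] := cross_curve_le_T inT Is Iu.
case: (ltgtP 0 (p s).2) a2 => // [cs _|cs _]; last first.
  have s_0 : s = 0.
    by apply: (cross_curve_eq0 Is (I01_0 R)); rewrite crossC cr0 -cs mulr0 oppr0.
  have [_ btu] := cross_curve_le_T inT It Iu.
  by subst s; rewrite !cr0; lra.
set A := cross (p s) (p t) in A0 Pl H1 *; set B := cross (p t) (p u) in B0 Pl *.
set D := cross (p s) (p u) in Pl bs *.
have h1 : r * (p t).2 * D <= (r * (p s).2 + A) * D.
  by rewrite ler_wpM2r // /D cross_curve_ge0 // (le_trans st tu).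
have h2 : A * (D - r * (p u).2) <= A * (r * (p s).2) by rewrite ler_wpM2l //; lra.
have rs : 0 < r * (p s).2 by rewrite mulr_gt0.
have : r * (p s).2 * (B - A - D) <= 0 by nra.
by rewrite pmulr_rle0 //; lra.
Qed.

Lemma cross_distC x y : cross_dist x y = cross_dist y x.
Proof. by rewrite /cross_dist crossC normrN. Qed.

Lemma cross_dist_sorted x y : I01 x -> I01 y -> x <= y ->
  cross_dist x y = cross (p x) (p y).
Proof. by move=> Ix Iy xy; rewrite /cross_dist ger0_norm // cross_curve_ge0. Qed.

Lemma cross_dist_triangle (x y z : R) : curve_in_T -> cross_subadditive ->
  I01 x -> I01 y -> I01 z -> cross_dist x z <= cross_dist x y + cross_dist y z.
Proof.
move=> inT sub.
suff sorted s t u : I01 s -> I01 u -> s <= t -> t <= u ->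
    [/\ cross_dist s u <= cross_dist s t + cross_dist t u,
        cross_dist s t <= cross_dist s u + cross_dist t u &
        cross_dist t u <= cross_dist s t + cross_dist s u].
  move=> Ix Iy Iz; wlog xz : x z Ix Iz / x <= z.
    move=> H; case: (lerP x z) => xz; first exact: H.
    rewrite (cross_distC x z) addrC (cross_distC y z) (cross_distC x y).
    by apply: H => //; exact: ltW.
  case: (lerP y x) => yx.
    by have [_ _] := sorted y x z Iy Iz yx xz; rewrite (cross_distC y x).
  case: (lerP y z) => yz; first by have [] := sorted x y z Ix Iz (ltW yx) yz.
  by have [_ + _] := sorted x z y Ix Iy xz (ltW yz); rewrite (cross_distC z y).
move=> Is Iu st tu; have It := I01_between Is Iu st tu.
rewrite !cross_dist_sorted //; last exact: le_trans st tu.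
split; [exact: sub|exact: cross_triangle_left|exact: cross_triangle_right].
Qed.

End SweepingCurve.

Lemma convex_curveP (R : realType) (r : R) (p : R -> R * R) : 0 < r ->
  convex_curve p (e1 r) (e2 r) <-> sweeping_curve r p /\ cross_subadditive p.
Proof.
move=> r0; split.
- move=> [/within_continuous01P pc pQ parg [p0 p1] cvx].
  have pos t : I01 t -> [/\ 0 <= (p t).1, 0 <= (p t).2 & 0 < (p t).1 + (p t).2].
    move=> It; have [[a1 a2] nz] := pQ t It; split=> //.
    rewrite lt_def addr_ge0 // andbT; apply/eqP => e; apply: nz.
    by move: a1 a2 e; case: (p t) => a b /= *; congr pair; lra.
  have hp : sweeping_curve r p.
    split=> // s t Is It st; have [Qs nzs] := pQ s Is; have [Qt nzt] := pQ t It.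
    by apply/(arg_lt_cross Qs Qt nzs nzt); apply: parg.
  split=> //; apply: (cross_subadditive_of_convex hp).
  have U0 := inner_region0 p; rewrite -(component_inner_region hp U0).
  apply: cvx (inner_region_sub hp U0) _.
  by rewrite (component_inner_region hp U0); exact: inner_region_bounded hp.
- move=> [hp sub]; have [_ pc pos parg p01] := hp.
  have pQ t : I01 t -> Quad (p t) /\ p t <> (0, 0).
    move=> /pos[a1 a2 a3]; split=> // e.
    by move: a3; rewrite e /= addr0 ltxx.
  split=> //.
  + exact/within_continuous01P.
  + move=> s t Is It st; have [Qs nzs] := pQ s Is; have [Qt nzt] := pQ t It.
    by apply/(arg_lt_cross Qs Qt nzs nzt); apply: parg.
  + move=> x Qx bx; have [Ux|Vx] := quad_minus_curve_sub hp Qx.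
      by rewrite (component_inner_region hp Ux); exact: inner_region_convex hp sub.
    by exfalso; apply: (component_outer_unbounded hp Vx).
Qed.

Lemma curve_in_T_of_sub (R : realType) (r : R) (p : R -> R * R) : 0 < r ->
  p @` I01 (R:=R) `<=` Tset (e1 r) (e2 r) -> curve_in_T r p.
Proof.
by move=> r0 pT t It; have /(in_Tset_e12 _ r0)[] := pT _ (ex_intro2 _ _ t It erefl).
Qed.

Section CrossMetric.
Variables (R : realType) (r : R) (p : R -> R * R).
Implicit Types (s t x y : R).
Hypotheses (hp : sweeping_curve r p) (inT : curve_in_T r p)
  (hsub : cross_subadditive p).

Definition cross_metric x y := cross_dist p x y / r.

Let r0 : 0 < r. Proof. by case: hp. Qed.

Lemma cross_metric_curve : curve_of cross_metric = p @` I01 (R:=R).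
Proof.
have [_ _ _ _ [p0 p1]] := hp.
apply: eq_imagel => t It; have [a1 a2 _] := curve_quad hp It.
rewrite /cross_metric /cross_dist p0 p1 /cross /= !mulr0 subr0 sub0r normrN.
rewrite !normrM (gtr0_norm r0) !mulfK ?gt_eqF // !ger0_norm //.
by case: (p t).
Qed.

Lemma cross_metric01 : cross_metric 0 1 = r.
Proof.
have [_ _ _ _ [p0 p1]] := hp.
rewrite /cross_metric /cross_dist p0 p1 /cross /= mul0r subr0 gtr0_norm ?mulr_gt0 //.
by rewrite mulfK // gt_eqF.
Qed.

Lemma cross_metric_metric : metric_on01 cross_metric.
Proof.
have rn : r != 0 by rewrite gt_eqF.
split.
- move=> x Ix; rewrite /cross_metric /cross_dist /cross.
  by rewrite (mulrC (p x).1) subrr normr0 mul0r.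
- move=> x y Ix Iy /eqP; rewrite mulf_eq0 invr_eq0 (negPf rn) orbF normr_eq0.
  by move=> /eqP /(cross_curve_eq0 hp Ix Iy).
- by move=> x y Ix Iy; rewrite /cross_metric cross_distC.
- move=> x y z Ix Iy Iz; rewrite /cross_metric -mulrDl ler_pM2r ?invr_gt0 //.
  exact (cross_dist_triangle hp inT hsub Ix Iy Iz).
Qed.

Lemma cross_metric_topology : induces_standard_topology cross_metric.
Proof.
move=> U UI; split.
- move=> dU x Ux; have [e e0 He] := dU x Ux; have Ix := UI x Ux.
  have [del del0 Hdel] := cross_curve_continuous01 hp (p x) Ix (mulr_gt0 e0 r0).
  exists del => // y Iy xy; apply: He => //; have := Hdel y Iy xy.
  rewrite /cross_metric /cross_dist ltr_pdivrMr // (crossC (p x) (p y)) normrN.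
  by rewrite {1}/cross (mulrC (p x).1) subrr sub0r normrN.
(* In T the weights [(p x).1 + (p x).2] are at least [r], so the angle moves by
   at most [cross_metric x y / r]. *)
- move=> sU x Ux; have [eps eps0 He] := sU x Ux; have Ix := UI x Ux.
  have [rho rho0 Hrho] := increasing01_inverse_near (angle_coord_curve_lt hp) Ix eps0.
  exists (rho * r); first by rewrite mulr_gt0.
  move=> y Iy dxy; apply: He => //; rewrite distrC; apply: Hrho => //.
  have [_ _ a3] := curve_quad hp Ix; have [_ _ b3] := curve_quad hp Iy.
  have [t1 _ _] := inT Ix; have [u1 _ _] := inT Iy.
  have SS : 0 < ((p x).1 + (p x).2) * ((p y).1 + (p y).2) by rewrite mulr_gt0.
  have SS' : 0 < (((p x).1 + (p x).2) * ((p y).1 + (p y).2))^-1 by rewrite invr_gt0.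
  rewrite angle_coord_diff ?gt_eqF // normrM (gtr0_norm SS') ltr_pdivrMr //.
  move: dxy; rewrite /cross_metric ltr_pdivrMr // => /lt_le_trans; apply.
  rewrite -mulrA; apply: ler_wpM2l; first exact: ltW.
  by apply: ler_pM => //; exact: ltW.
Qed.

Lemma cross_metric_ptolemy : ptolemy_eq cross_metric.
Proof.
move=> x1 x2 x3 x4 I1 I4 h12 h23 h34.
have I2 := I01_between I1 I4 h12 (le_trans h23 h34).
have I3 := I01_between I1 I4 (le_trans h12 h23) h34.
have h13 := le_trans h12 h23; have h24 := le_trans h23 h34.
rewrite /cross_metric (cross_distC p x3 x2) !(cross_dist_sorted hp) ?(le_trans h13 h34) //.
by rewrite /cross; field; rewrite gt_eqF.
Qed.

End CrossMetric.

Section PtolemyInterval.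
Variables (R : realType) (d : R -> R -> R).
Implicit Types (s t x y c e : R).

Definition curve_point t := (d t 1, d t 0).

Lemma metric_ge0 x y : metric_on01 d -> I01 x -> I01 y -> 0 <= d x y.
Proof.
move=> [d0 _ dC dT] Ix Iy.
by have := dT x y x Ix Iy Ix; rewrite d0 // (dC y x) //; lra.
Qed.

Lemma metric_ball_open t e : metric_on01 d -> I01 t ->
  d_open d [set y | I01 y /\ d t y < e].
Proof.
move=> [_ _ _ dT] It y [Iy ty]; exists (e - d t y); first by rewrite subr_gt0.
by move=> z Iz yz; split=> //; have := dT t y z It Iy Iz; lra.
Qed.

Lemma metric_continuous01 c : metric_on01 d -> induces_standard_topology d ->
  I01 c -> continuous01 (fun t => d t c).
Proof.
move=> md htop Ic t It e e0; have [d0 _ dC dT] := md.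
have sU : std_open [set y | I01 y /\ d t y < e].
  by apply/htop; [move=> ? []|exact: metric_ball_open].
have [|del del0 Hdel] := sU t; first by split=> //; rewrite d0.
exists del => // s Is ts; have [_ hts] := Hdel _ Is ts.
have := dT t s c It Is Ic; have := dT s t c Is It Ic; rewrite (dC s t) //.
by rewrite ltr_norml; lra.
Qed.

Lemma ptolemy_cross x y : ptolemy_interval d -> I01 x -> I01 y -> x <= y ->
  cross (curve_point x) (curve_point y) = d 0 1 * d x y.
Proof.
move=> [[_ _ dC _] _ hp] Ix Iy xy.
have /I01P/andP[x0 _] := Ix; have /I01P/andP[_ y1] := Iy.
have e := hp 0 x y 1 (I01_0 R) (I01_1 R) x0 xy y1.
rewrite /cross /curve_point /= (dC y 0 Iy (I01_0 R)) (dC x 0 Ix (I01_0 R)).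
by rewrite (mulrC (d x 1)) e (dC y x Iy Ix); ring.
Qed.

Lemma ptolemy_cross_abs x y : ptolemy_interval d -> I01 x -> I01 y ->
  `|cross (curve_point x) (curve_point y)| = d 0 1 * d x y.
Proof.
move=> pd Ix Iy; have md : metric_on01 d by case: pd.
have d01 := metric_ge0 md (I01_0 R) (I01_1 R).
case: (lerP x y) => xy.
  by rewrite (ptolemy_cross pd Ix Iy xy) ger0_norm // mulr_ge0 // metric_ge0.
have [_ _ dC _] := md.
rewrite crossC normrN (ptolemy_cross pd Iy Ix (ltW xy)) (dC y x Iy Ix).
by rewrite ger0_norm // mulr_ge0 // metric_ge0.
Qed.

Lemma ptolemy_sweeping r : 0 < r -> ptolemy_interval d -> d 0 1 = r ->
  sweeping_curve r curve_point.
Proof.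
move=> r0 pd dr; have [md htop _] := pd; have [d0 dsep dC _] := md.
split=> //.
- by split; apply: metric_continuous01 => //; first [exact: I01_1 | exact: I01_0].
- move=> t It; rewrite /curve_point /=.
  have a1 := metric_ge0 md It (I01_1 R); have a2 := metric_ge0 md It (I01_0 R).
  split=> //; rewrite lt_def addr_ge0 // andbT; apply/eqP => e.
  have /(dsep _ _ It (I01_1 R)) t1 : d t 1 = 0 by lra.
  have /(dsep _ _ It (I01_0 R)) t0 : d t 0 = 0 by lra.
  by have := @oner_neq0 R; rewrite -t1 t0 eqxx.
- move=> s t Is It st; rewrite ptolemy_cross ?ltW // dr mulr_gt0 //.
  rewrite lt_def metric_ge0 // andbT; apply: contraTneq st => /(dsep _ _ Is It) ->.
  by rewrite ltxx.
- by rewrite /curve_point (d0 0 (I01_0 R)) (d0 1 (I01_1 R)) (dC 1 0 (I01_1 R) (I01_0 R)) dr.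
Qed.

Lemma ptolemy_curve_in_T r : ptolemy_interval d -> d 0 1 = r ->
  curve_in_T r curve_point.
Proof.
move=> [[_ _ dC dT] _ _] dr t It; rewrite /curve_point /=.
have := dT 0 t 1 (I01_0 R) It (I01_1 R); have := dT t 1 0 It (I01_1 R) (I01_0 R).
have := dT t 0 1 It (I01_0 R) (I01_1 R).
rewrite (dC 0 t (I01_0 R) It) (dC 1 0 (I01_1 R) (I01_0 R)) dr; split; lra.
Qed.

Lemma ptolemy_cross_subadditive r : 0 < r -> ptolemy_interval d -> d 0 1 = r ->
  cross_subadditive curve_point.
Proof.
move=> r0 pd dr s t u Is Iu st tu; have It := I01_between Is Iu st tu.
have [[_ _ _ dT] _ _] := pd.
rewrite !ptolemy_cross ?(le_trans st tu) // dr -mulrDr ler_pM2l //.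
exact: dT.
Qed.

End PtolemyInterval.

Section Isometry.
Variables (R : realType) (d d' : R -> R -> R) (f : R -> R).
Implicit Types (s t x y : R).
Hypotheses (md : metric_on01 d) (md' : metric_on01 d')
  (fI : forall x, I01 x -> I01 (f x))
  (fS : forall y, I01 y -> exists2 x, I01 x & f x = y)
  (fiso : forall x y, I01 x -> I01 y -> d' (f x) (f y) = d x y).

Lemma isometry01_continuous : induces_standard_topology d ->
  induces_standard_topology d' -> continuous01 f.
Proof.
move=> htop htop' t It e e0; have Ift := fI It.
set U := [set z | I01 z /\ `|f t - z| < e].
have sU : std_open U.
  move=> z [Iz tz]; exists (e - `|f t - z|); first by rewrite subr_gt0.
  by move=> y Iy zy; split=> //; have := ler_distD z (f t) y; lra.
have [|e' e'0 He'] := (htop' U (fun _ h => proj1 h)).2 sU (f t).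
  by split; rewrite ?subrr ?normr0.
have [|del del0 Hdel] :=
  (htop _ (fun _ h => proj1 h)).1 (metric_ball_open (e := e') md It) t.
  by have [d0 _ _ _] := md; split; rewrite ?d0.
exists del => // s Is ts; have [_ hs] := Hdel s Is ts.
by have [] : U (f s) by apply: He' => //; [exact: fI|rewrite fiso].
Qed.

Lemma increasing_onto01_endpoints (g : R -> R) :
  (forall x, I01 x -> I01 (g x)) -> (forall y, I01 y -> exists2 x, I01 x & g x = y) ->
  {in `[0, 1]%R &, {mono g : x y / x <= y}} -> g 0 = 0 /\ g 1 = 1.
Proof.
move=> gI gS mono; have I0 := I01_0 R; have I1 := I01_1 R.
have [x0 /[dup] Ix0 /I01P/andP[x00 _] gx0] := gS 0 I0.
have [x1 /[dup] Ix1 /I01P/andP[_ x11] gx1] := gS 1 I1.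
have /I01P/andP[g00 _] := gI 0 I0; have /I01P/andP[_ g11] := gI 1 I1.
have in01 x : I01 x -> x \in `[0, 1]%R by move/in_I01.
have g0 : g 0 <= 0 by rewrite -[X in _ <= X]gx0 (mono _ _ (in01 _ I0) (in01 _ Ix0)).
have g1 : 1 <= g 1 by rewrite -[X in X <= _]gx1 (mono _ _ (in01 _ Ix1) (in01 _ I1)).
by split; apply/eqP; rewrite eq_le ?g0 ?g1 ?g00 ?g11.
Qed.

Lemma isometry01_endpoints : continuous01 f ->
  (f 0 = 0 /\ f 1 = 1) \/ (f 0 = 1 /\ f 1 = 0).
Proof.
move=> fc; have cf := continuous01_within fc (lexx 0) (lexx 1).
have finj : {in `[0, 1]%R &, injective f}.
  move=> x y /in_I01 Ix /in_I01 Iy e; have [_ dsep _ _] := md.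
  have [d0' _ _ _] := md'.
  by apply: dsep => //; rewrite -fiso // e d0' //; exact: fI.
case: (lerP (f 0) (f 1)) => f01.
  by left; apply: increasing_onto01_endpoints => //; apply: segment_continuous_inj_le.
right; have [|||[g0 g1]] := @increasing_onto01_endpoints (fun x => 1 - f x).
- by move=> x /fI /I01P/andP[? ?]; apply/I01P; apply/andP; split; lra.
- move=> y /I01P/andP[? ?]; have [|x Ix fx] := fS (y := 1 - y); first by apply/I01P; lra.
  by exists x => //; rewrite fx; lra.
- move=> x y Ix Iy /=; rewrite lerD2l lerN2.
  exact: (segment_continuous_inj_ge (ltW f01) cf finj).
- by split; lra.
Qed.

Lemma isometry01_curve_of :
  curve_of d = (fun t => (d' t (f 1), d' t (f 0))) @` I01 (R:=R).
Proof.
have fIS : f @` I01 (R:=R) = I01 (R:=R).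
  by apply/seteqP; split=> [_ [x /fI Ifx <-] //|y /fS[x Ix <-]]; exists x.
rewrite -fIS image_comp /curve_of; apply: eq_imagel => t It /=.
by rewrite (fiso It (I01_1 R)) (fiso It (I01_0 R)).
Qed.

End Isometry.

Lemma isometric_curve_of (R : realType) (d d' : R -> R -> R) :
  ptolemy_interval d -> ptolemy_interval d' -> isometric01 d d' ->
  curve_of d = curve_of d' \/ curve_of d = reflect_set (curve_of d').
Proof.
move=> [md htop _] [md' htop' _] [f [fI fS fiso]].
have fc := isometry01_continuous md fI fiso htop htop'.
rewrite (isometry01_curve_of fI fS fiso).
case: (isometry01_endpoints md md' fI fS fiso fc) => -[-> ->]; [left|right] => //.
by rewrite /reflect_set /curve_of image_comp.
Qed.

Lemma isometric_of_cross_preserving (R : realType) (r : R) (d d' : R -> R -> R)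
    (sig : R * R -> R * R) :
  0 < r -> ptolemy_interval d -> d 0 1 = r -> ptolemy_interval d' -> d' 0 1 = r ->
  (forall u w, `|cross (sig u) (sig w)| = `|cross u w|) ->
  (forall x, I01 x -> exists2 y, I01 y & curve_point d' y = sig (curve_point d x)) ->
  (forall y, I01 y -> exists2 x, I01 x & curve_point d' y = sig (curve_point d x)) ->
  isometric01 d d'.
Proof.
move=> r0 pd dr pd' dr' sigP dd' d'd; have sw' := ptolemy_sweeping r0 pd' dr'.
pose f x := xget 0 [set y | I01 y /\ curve_point d' y = sig (curve_point d x)].
have fP x : I01 x -> I01 (f x) /\ curve_point d' (f x) = sig (curve_point d x).
  move=> Ix; apply: (xgetPex 0
    (P := [set y | I01 y /\ curve_point d' y = sig (curve_point d x)])).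
  by have [y Iy e] := dd' x Ix; exists y.
exists f; split.
- by move=> x /fP[].
- move=> y Iy; have [x Ix ex] := d'd y Iy; exists x => //; have [Ifx efx] := fP x Ix.
  by apply: (cross_curve_eq0 sw' Ifx Iy); rewrite efx -ex /cross; ring.
- move=> x y Ix Iy; have [Ifx efx] := fP x Ix; have [Ify efy] := fP y Iy.
  apply: (mulfI (lt0r_neq0 r0)); rewrite -{1}dr' -dr -!ptolemy_cross_abs //.
  by rewrite efx efy sigP.
Qed.

Lemma isometric01_curveP (R : realType) (r : R) (d d' : R -> R -> R) :
  0 < r -> ptolemy_interval d -> d 0 1 = r -> ptolemy_interval d' -> d' 0 1 = r ->
  isometric01 d d' <->
  curve_of d = curve_of d' \/ curve_of d = reflect_set (curve_of d').
Proof.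
move=> r0 pd dr pd' dr'; split; first exact: isometric_curve_of.
case=> E.
- apply: (isometric_of_cross_preserving (sig := id) r0 pd dr pd' dr') => //.
  + move=> x Ix; have [y Iy e] : curve_of d' (curve_point d x) by rewrite -E; exists x.
    by exists y.
  + move=> y Iy; have [x Ix e] : curve_of d (curve_point d' y) by rewrite E; exists y.
    by exists x.
- apply: (isometric_of_cross_preserving (sig := @swap_pt R) r0 pd dr pd' dr').
  + by move=> u w; rewrite -normrN; congr `|_|; rewrite /cross /=; ring.
  + move=> x Ix; have [_ [y Iy <-] e] : reflect_set (curve_of d') (curve_point d x).
      by rewrite -E; exists x.
    by exists y => //; rewrite -e swap_ptK.
  + move=> y Iy; have [x Ix e] : curve_of d (swap_pt (curve_point d' y)).
      by rewrite E; exists (curve_point d' y) => //; exists y.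
    by exists x => //; rewrite -[LHS]swap_ptK -e.
Qed.

Lemma convex_curve_set_of_ptolemy (R : realType) (r : R) (d : R -> R -> R) :
  0 < r -> ptolemy_interval d -> d 0 1 = r -> convex_curve_set r (curve_of d).
Proof.
move=> r0 pd dr; have sw := ptolemy_sweeping r0 pd dr.
exists (curve_point d); split => //.
- by apply/(convex_curveP _ r0); split=> //; exact: ptolemy_cross_subadditive r0 pd dr.
- move=> _ [t It <-]; have [a1 a2 _] := curve_quad sw It.
  by have [? ? ?] := ptolemy_curve_in_T pd dr It; apply/in_Tset_e12.
Qed.

Lemma ptolemy_of_convex_curve_set (R : realType) (r : R) (A : set (R * R)) :
  0 < r -> convex_curve_set r A ->
  exists d : R -> R -> R,
    [/\ ptolemy_interval d, d 0 1 = r & curve_of d = A \/ curve_of d = reflect_set A].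
Proof.
move=> r0 [p [/(convex_curveP _ r0)[sw sub] pA AT]].
have inT : curve_in_T r p by apply: (curve_in_T_of_sub r0); rewrite pA.
exists (cross_metric r p); split.
- by split; [exact: cross_metric_metric|exact: cross_metric_topology|
    exact: cross_metric_ptolemy].
- exact: cross_metric01.
- by left; rewrite cross_metric_curve.
Qed.

Theorem proposition3p7 (R : realType) (r : R) (hr : 0 < r) :
  (forall d : R -> R -> R, ptolemy_interval d -> d 0 1 = r ->
     convex_curve_set r (curve_of d))
  /\
  (forall d d' : R -> R -> R,
     ptolemy_interval d -> d 0 1 = r -> ptolemy_interval d' -> d' 0 1 = r ->
     (isometric01 d d' <->
        (curve_of d = curve_of d' \/ curve_of d = reflect_set (curve_of d'))))
  /\
  (forall A : set (R * R), convex_curve_set r A ->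
     exists d : R -> R -> R,
       [/\ ptolemy_interval d, d 0 1 = r &
           (curve_of d = A \/ curve_of d = reflect_set A)]).
Proof.
split; first by move=> d; exact: convex_curve_set_of_ptolemy.
split; first by move=> d d'; exact: isometric01_curveP.
by move=> A; exact: ptolemy_of_convex_curve_set.
Qed.
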